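(* Let $\lambda_1$ be a Dyck path of length $2n_1$ and $\lambda_2$ a Dyck path of length $2m_1$, and let $\lambda=\lambda_1\lambda_2$ be their concatenation. Then $$P_{\lambda,\lambda_0}=\genfrac{[}{]}{0pt}{}{n_1+m_1}{n_1}P_{\lambda_1,\lambda_0}P_{\lambda_2,\lambda_0}.$$
   Context: $[n]=\sum_{i=0}^{n-1}q^i$, $[n]!=\prod_{i=1}^n[i]$, $\genfrac{[}{]}{0pt}{}{n}{k}=[n]!/([k]![n-k]!)$. For a Dyck word $\lambda$: chords are matched $U$–$D$ pairs (parenthesis matching); $A(\lambda)$ is the rooted plane tree with one edge per chord, the edge of chord $c$ hanging directly below the edge of the innermost chord strictly containing $c$, or from the root if none; siblings ordered left to right. The capacity of a leaf edge (a chord whose $U$ is immediately followed by its $D$), with respect to $\lambda_0$ the all-$U$ word of the length of $\lambda$, is the number of $D$'s of $\lambda$ strictly to the left of that $U$. A labelling of Lascoux--Sch\''utzenberger type assigns non-negative integers to edges so that each edge's label is at most those of the edges directly below it, and each leaf edge's label is at most its capacity. $P_{\lambda,\lambda_0}=\sum q^{\text{sum of labels}}$ over these labellings. *)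

(* Dyck words as seq bool: true = U, false = D. Positions are 0-based. *)
From HB Require Import structures.
From mathcomp Require Import all_boot all_order all_algebra.
Set Implicit Arguments. Unset Strict Implicit. Unset Printing Implicit Defensive.
Import GRing.Theory.
Local Open Scope ring_scope.

Definition qint (n : nat) : {poly rat} := \sum_(i < n) 'X^i.
Definition qfact (n : nat) : {poly rat} := \prod_(i < n) qint i.+1.
Definition qbinom (n k : nat) : {poly rat} := qfact n %/ (qfact k * qfact (n - k)).

Definition isU (w : seq bool) (i : nat) : bool := nth false w i.
Definition nU (s : seq bool) : nat := count id s.
Definition nD (s : seq bool) : nat := count negb s.

Definition dyck (w : seq bool) : bool :=
  (nU w == nD w) && [forall k : 'I_(size w).+1, nD (take k w) <= nU (take k w)]%N.

Definition seg (w : seq bool) (i j : nat) : seq bool := take (j - i).+1 (drop i w).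

(* the U at position i is matched with the D at position j (parenthesis matching) *)
Definition is_match (w : seq bool) (i j : nat) : bool :=
  [&& (i < j)%N, isU w i, ~~ isU w j, nU (seg w i j) == nD (seg w i j)
   & [forall k : 'I_j, (i < k)%N ==> (nU (seg w i k) != nD (seg w i k))]].

Definition contains (w : seq bool) (c d : nat) : bool :=
  [exists j : 'I_(size w), is_match w c j && (c < d < j)%N].

Definition parent (w : seq bool) (c d : nat) : bool :=
  [&& isU w c, isU w d, contains w c d
   & [forall c' : 'I_(size w), (isU w c' && contains w c' d) ==> (c' <= c)%N]].

Definition leaf (w : seq bool) (c : nat) : bool := isU w c && ~~ isU w c.+1.

(* capacity (w.r.t. the all-U word): number of D's strictly left of the U *)
Definition cap (w : seq bool) (c : nat) : nat := nD (take c w).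

(* Lascoux--Schuetzenberger labelling; labels are stored at the U-position of
   each chord, and non-chord (D) positions carry label 0 *)
Definition LSlabelling (w : seq bool) (f : nat -> nat) : bool :=
  [forall i : 'I_(size w),
     [&& (~~ isU w i) ==> (f i == 0%N),
         leaf w i ==> (f i <= cap w i)%N
       & [forall j : 'I_(size w), parent w i j ==> (f i <= f j)%N]]].

(* P_{w, w0}. Every LS labelling has all labels <= size w (each label is bounded
   by a leaf capacity below it, which is < size w), so labels in 'I_(size w).+1
   enumerate all labellings. *)
Definition Ppoly (w : seq bool) : {poly rat} :=
  \sum_(f : {ffun 'I_(size w) -> 'I_(size w).+1}
        | LSlabelling w (fun i => oapp (fun j : 'I_(size w) => nat_of_ord (f j)) 0%N (insub i)))
     'X^(\sum_(i < size w) nat_of_ord (f i)).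

(* Write a Dyck word as the word of a plane forest, and generalise P by raising
   every leaf capacity by [c] and requiring every root label to be at least [x].
   The generalised sum is multiplicative under concatenation, the right factor
   seeing its capacities raised by the number of D's on the left.  Wrapping a
   forest under a new root sums over the label of that root, which the
   q-hockey-stick identity evaluates; by induction, for a forest with [k] nodes
   and [x <= c] the sum is q^(x k) [k + c - x, k] P_F.  For the concatenation
   [l1 l2] the factor of [l2] has [c = n1] and [x = 0], i.e. it is
   [m1 + n1, m1] P_l2. *)

From mathcomp Require Import all_boot all_order all_algebra.
From mathcomp Require Import zify ring.
Set Implicit Arguments. Unset Strict Implicit. Unset Printing Implicit Defensive.
Import GRing.Theory Num.Theory.

Section QBinomial.
Local Open Scope ring_scope.

(* Division-free Gaussian binomials (q-Pascal rule); [qbinomE] relates them to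
   [qbinom]. *)
Fixpoint qbin (n k : nat) : {poly rat} :=
  match n, k with
  | _, 0%N => 1
  | 0%N, _.+1 => 0
  | n'.+1, k'.+1 => qbin n' k' + 'X^(k'.+1) * qbin n' k'.+1
  end.

Lemma qbin0 n : qbin n 0 = 1. Proof. by case: n. Qed.

Lemma qbin_small n k : (n < k)%N -> qbin n k = 0.
Proof. by elim: n k => [|n IHn] [|k] //= lt_n_k; rewrite !IHn ?mulr0 ?addr0 // ltnW. Qed.

Lemma qbinn n : qbin n n = 1.
Proof. by elim: n => //= n ->; rewrite qbin_small ?mulr0 ?addr0. Qed.

Lemma qintD m n : qint (m + n) = qint m + 'X^m * qint n.
Proof.
rewrite /qint big_split_ord /= mulr_sumr; congr (_ + _).
by apply: eq_bigr => i _; rewrite exprD.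
Qed.

Lemma qint0 : qint 0 = 0.
Proof. by rewrite /qint big_ord0. Qed.

Lemma qfactS n : qfact n.+1 = qfact n * qint n.+1.
Proof. by rewrite /qfact big_ord_recr. Qed.

Lemma qfact0 : qfact 0 = 1.
Proof. by rewrite /qfact big_ord0. Qed.

Lemma qfact_neq0 n : qfact n != 0.
Proof.
apply/prodf_neq0 => i _; apply/eqP => /(congr1 (horner^~ 1)).
rewrite horner_sum (eq_bigr (fun=> 1)) => [|j _]; last by rewrite hornerXn expr1n.
by rewrite sumr_const card_ord horner0 => /eqP; rewrite pnatr_eq0.
Qed.

Lemma qbin_fact n k : (k <= n)%N -> qbin n k * (qfact k * qfact (n - k)) = qfact n.
Proof.
elim: n k => [|n IHn] [|k] // lekn; rewrite ?qbin0 ?qfact0 ?subn0 ?mul1r //.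
rewrite [qbin _ _]/= subSS [RHS]qfactS.
have -> : qint n.+1 = qint k.+1 + 'X^(k.+1) * qint (n - k).
  by rewrite -qintD; congr qint; lia.
have IHk : qbin n k * (qfact k.+1 * qfact (n - k)) = qfact n * qint k.+1.
  by rewrite qfactS -(IHn k lekn); ring.
have IHk1 : qbin n k.+1 * (qfact k.+1 * qfact (n - k)) = qfact n * qint (n - k).
  have [ltkn | lenk] := ltnP k n.
    have -> : (n - k = (n - k.+1).+1)%N by lia.
    by rewrite (qfactS (n - k.+1)) -(IHn k.+1 ltkn); ring.
  have -> : (n - k = 0)%N by lia.
  by rewrite qbin_small // qint0 mul0r mulr0.
by rewrite mulrDl -mulrA IHk1 IHk; ring.
Qed.

Lemma qbin_factD a b : qbin (a + b) a * (qfact a * qfact b) = qfact (a + b).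
Proof. by have := qbin_fact (leq_addr b a); rewrite addKn. Qed.

Lemma qbin_sym a b : qbin (a + b) a = qbin (a + b) b.
Proof.
apply: (mulIf (mulf_neq0 (qfact_neq0 a) (qfact_neq0 b))).
by rewrite qbin_factD [qfact a * _]mulrC [in RHS]addnC qbin_factD addnC.
Qed.

Lemma qbinomE n k : (k <= n)%N -> qbinom n k = qbin n k.
Proof.
move=> lekn; rewrite /qbinom -(qbin_fact lekn) mulpK //.
by rewrite mulf_neq0 ?qfact_neq0.
Qed.

Lemma qbin_trinomial a b m :
  qbin (a + m) a * qbin (b + (a + m)) b = qbin (a + b + m) (a + b) * qbin (a + b) b.
Proof.
have nz : qfact a * qfact b * qfact m != 0 by rewrite !mulf_neq0 ?qfact_neq0.
apply: (mulIf nz); transitivity (qfact (b + (a + m))).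
  by rewrite -(qbin_factD b) -(qbin_factD a m); ring.
rewrite (_ : b + (a + m) = a + b + m)%N; last by lia.
by rewrite -(qbin_factD (a + b) m) -(qbin_factD a b) (qbin_sym a b); ring.
Qed.

Lemma qbin_hockey a x c : (x <= c)%N ->
  \sum_(x <= y < c.+1) 'X^(y * a.+1) * qbin (a + (c - y)) a
  = 'X^(x * a.+1) * qbin (a.+1 + (c - x)) a.+1.
Proof.
move=> lexc; move Ed: (c - x)%N => d; elim: d x lexc Ed => [|d IHd] x lexc Ed.
  have -> : x = c by lia.
  by rewrite big_nat1 subnn !addn0 !qbinn.
rewrite big_ltn ?IHd ?Ed; [|lia..].
rewrite addSnnS (_ : a.+1 + d.+1 = (a + d.+1).+1)%N // [in RHS]/= mulrDr.
by rewrite mulrA -exprD mulSnr.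
Qed.
End QBinomial.

Section Matching.
Implicit Types (w u v a : seq bool) (i j k c d : nat).

Lemma nU_cat u v : nU (u ++ v) = nU u + nU v. Proof. exact: count_cat. Qed.
Lemma nD_cat u v : nD (u ++ v) = nD u + nD v. Proof. exact: count_cat. Qed.

Lemma isU_lt_size w i : isU w i -> i < size w.
Proof. by rewrite /isU; case: ltnP => // le_w_i; rewrite nth_default. Qed.

Lemma isU_catl u v i : i < size u -> isU (u ++ v) i = isU u i.
Proof. by move=> lt_i_u; rewrite /isU nth_cat lt_i_u. Qed.

Lemma isU_catr u v i : isU (u ++ v) (size u + i) = isU v i.
Proof. by rewrite /isU nth_cat ltnNge leq_addr addKn. Qed.

Lemma seg_catl u v i j : i <= j < size u -> seg (u ++ v) i j = seg u i j.
Proof.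
move=> /andP[le_i_j lt_j_u]; rewrite /seg drop_cat; case: ltnP => [_|]; last by lia.
by rewrite takel_cat // size_drop; lia.
Qed.

Lemma seg_catr u v i j : seg (u ++ v) (size u + i) (size u + j) = seg v i j.
Proof. by rewrite /seg subnDl addnC -drop_drop drop_size_cat. Qed.

Lemma is_matchP w i j : reflect
  [/\ i < j, isU w i, ~~ isU w j, nU (seg w i j) = nD (seg w i j)
    & forall k, i < k < j -> nU (seg w i k) <> nD (seg w i k)]
  (is_match w i j).
Proof.
apply: (iffP and5P) => [[lt_i_j Ui Dj /eqP bal /forallP inner]|[lt_i_j Ui Dj bal inner]].
  split=> // k /andP[lt_i_k lt_k_j].
  by move: (inner (Ordinal lt_k_j)); rewrite /= lt_i_k => /eqP.
split=> //; first exact/eqP.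
by apply/forallP => k; apply/implyP => lt_i_k; apply/eqP/inner; rewrite lt_i_k ltn_ord.
Qed.

Lemma is_match_isU w i j : is_match w i j -> isU w i.
Proof. by case/is_matchP. Qed.

Lemma is_match_uniq w i j j' : is_match w i j -> is_match w i j' -> j = j'.
Proof.
move=> /is_matchP[lt_i_j _ _ bal_j inner] /is_matchP[lt_i_j' _ _ bal_j' inner'].
case: (ltngtP j j') => // [lt_j_j' | lt_j'_j].
  by case: (inner' j); rewrite ?lt_i_j.
by case: (inner j'); rewrite ?lt_i_j'.
Qed.

Lemma is_match_catl u v i j : j < size u -> is_match (u ++ v) i j = is_match u i j.
Proof.
move=> lt_j_u; apply/is_matchP/is_matchP => -[lt_i_j Ui Dj bal inner].
all: have lt_i_u : i < size u by apply: ltn_trans lt_j_u.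
all: have seg_cat k : i <= k <= j -> seg (u ++ v) i k = seg u i k
       by case/andP=> le_i_k le_k_j; rewrite seg_catl //; apply/andP; split; lia.
all: have seg_ij : seg (u ++ v) i j = seg u i j by rewrite seg_cat // (ltnW lt_i_j) leqnn.
  rewrite (isU_catl v lt_i_u) (isU_catl v lt_j_u) seg_ij in Ui Dj bal.
  by split=> // k lt_ijk; have := inner k lt_ijk; rewrite seg_cat //; lia.
rewrite (isU_catl v lt_i_u) (isU_catl v lt_j_u) seg_ij.
by split=> // k lt_ijk; rewrite seg_cat; [apply: inner | lia].
Qed.

Lemma is_match_catr u v i j :
  is_match (u ++ v) (size u + i) (size u + j) = is_match v i j.
Proof.
apply/is_matchP/is_matchP => -[lt_i_j Ui Dj bal inner].
  rewrite ltn_add2l !isU_catr seg_catr in lt_i_j Ui Dj bal.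
  split=> // k lt_ijk; rewrite -(seg_catr u); apply: inner.
  by rewrite !ltn_add2l.
rewrite ltn_add2l !isU_catr seg_catr; split=> // k lt_ijk.
by rewrite -(subnKC (_ : size u <= k)) ?seg_catr; [apply: inner | ]; lia.
Qed.

Definition matched u := forall i, isU u i -> exists2 j, j < size u & is_match u i j.

Lemma is_match_cat u v i j : matched u -> i < size u ->
  is_match (u ++ v) i j = (j < size u) && is_match u i j.
Proof.
move=> mu lt_i_u; case: ltnP => [|le_u_j]; first exact: is_match_catl.
apply/negP => mij; have := is_match_isU mij; rewrite isU_catl // => /mu[j' lt_j'_u].
by rewrite -(is_match_catl v) // => /(is_match_uniq mij); lia.
Qed.

Lemma matched_cat u v : matched u -> matched v -> matched (u ++ v).
Proof.
move=> mu mv i; case: (ltnP i (size u)) => [lt_i_u | le_u_i].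
  rewrite isU_catl // => /mu[j lt_j_u mij].
  by exists j; rewrite ?is_match_catl // size_cat ltn_addr.
rewrite -(subnKC le_u_i) isU_catr => /mv[j lt_j_v mij].
by exists (size u + j); rewrite ?is_match_catr // size_cat ltn_add2l.
Qed.

Lemma is_match_lt_size w i j : matched w -> is_match w i j -> j < size w.
Proof.
by move=> mw mij; have [j' lt_j'_w /(is_match_uniq mij) ->] := mw i (is_match_isU mij).
Qed.

Definition balanced u := nU u = nD u.
Definition ballot u := forall k, nD (take k u) <= nU (take k u).

Lemma balanced_cat u v : balanced u -> balanced v -> balanced (u ++ v).
Proof. by rewrite /balanced nU_cat nD_cat => -> ->. Qed.

Lemma ballot_cat u v : ballot u -> balanced u -> ballot v -> ballot (u ++ v).
Proof.
move=> bu eu bv k; rewrite take_cat; case: ltnP => // _.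
by rewrite nU_cat nD_cat eu leq_add2l.
Qed.

Definition endsD u := ~~ isU u (size u).-1.

Lemma endsD_cat u v : endsD u -> endsD v -> endsD (u ++ v).
Proof.
rewrite /endsD size_cat; case: v => [|b v] eu ev; first by rewrite cats0 addn0.
by rewrite (_ : _.-1 = size u + size v)%N ?isU_catr //= addnS.
Qed.

Definition wrap a := true :: (a ++ [:: false]).

Lemma size_wrap a : size (wrap a) = (size a).+2.
Proof. by rewrite /= size_cat addn1. Qed.

Lemma isU_wrapS a i : isU (wrap a) i.+1 = isU a i.
Proof.
rewrite /wrap /isU /= nth_cat; case: ltnP => // le_a_i.
by rewrite [RHS]nth_default //; case: (i - size a)%N => [|[]].
Qed.

Lemma isU_wrap_last a : ~~ isU (wrap a) (size a).+1.
Proof. by rewrite isU_wrapS /isU nth_default. Qed.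

Lemma nD_wrap a : nD (wrap a) = (nD a).+1.
Proof. by rewrite /= nD_cat addn1. Qed.

Lemma balanced_wrap a : balanced a -> balanced (wrap a).
Proof. by rewrite /balanced /= nU_cat nD_cat => ->; rewrite addn0 addn1. Qed.

Lemma ballot_wrap a : ballot a -> balanced a -> ballot (wrap a).
Proof.
move=> ba ea [|k] //; rewrite /nU /nD /= take_cat; case: ltnP => _.
  by rewrite add0n add1n leqW // ba.
by rewrite !count_cat -/(nU a) -/(nD a) ea; case: (k - size a)%N => [|?] /=; lia.
Qed.

Lemma endsD_wrap a : endsD (wrap a).
Proof. by rewrite /endsD size_wrap isU_wrap_last. Qed.

Lemma is_match_wrap0 a j : ballot a -> balanced a ->
  is_match (wrap a) 0 j = (j == (size a).+1).
Proof.
move=> ba ea; have m0 : is_match (wrap a) 0 (size a).+1.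
  apply/is_matchP; split=> //; first exact: isU_wrap_last.
    by rewrite /seg take_oversize ?size_wrap // (balanced_wrap ea).
  move=> k /andP[lt_0_k lt_k_a]; rewrite /seg subn0 /wrap /= takel_cat; last by lia.
  by have := ba k; rewrite /nU /nD /=; lia.
by apply/idP/eqP => [/is_match_uniq/(_ m0)|->].
Qed.

Lemma is_match_wrapS a i j : matched a -> i < size a ->
  is_match (wrap a) i.+1 j.+1 = (j < size a) && is_match a i j.
Proof.
move=> ma lt_i_a; rewrite /wrap -cat1s.
by rewrite (is_match_catr [:: true] _ i j) is_match_cat.
Qed.

Lemma matched_wrap a : matched a -> ballot a -> balanced a -> matched (wrap a).
Proof.
move=> ma ba ea [_|i]; first by exists (size a).+1; rewrite ?size_wrap ?is_match_wrap0.
rewrite isU_wrapS => Ui; have [j lt_j_a mij] := ma i Ui.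
by exists j.+1; rewrite ?size_wrap ?is_match_wrapS ?lt_j_a ?(isU_lt_size Ui) // ltnS ltnW.
Qed.

End Matching.

Section Enclosure.
Implicit Types (w u v a : seq bool) (i j k c d : nat).

Definition encl w c d := exists2 j, is_match w c j & c < d < j.

Lemma encl_lt w c d : encl w c d -> c < d.
Proof. by case=> j _ /andP[]. Qed.

Lemma encl_isU w c d : encl w c d -> isU w c.
Proof. by case=> j /is_match_isU. Qed.

Lemma encl_lt_size w c d : matched w -> encl w c d -> d < size w.
Proof. by move=> mw [j /(is_match_lt_size mw) lt_j_w /andP[_ /ltn_trans]]; apply. Qed.

Lemma containsP w c d : matched w -> reflect (encl w c d) (contains w c d).
Proof.
move=> mw; apply: (iffP existsP) => [[j /andP[mcj lt_cdj]] | [j mcj lt_cdj]].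
  by exists j.
by exists (Ordinal (is_match_lt_size mw mcj)); rewrite mcj.
Qed.

Lemma encl_catl u v c d : matched u -> c < size u ->
  encl (u ++ v) c d <-> encl u c d.
Proof.
move=> mu lt_c_u; split=> -[j mcj lt_cdj]; exists j => //.
  by move: mcj; rewrite is_match_cat // => /andP[].
by rewrite is_match_cat // mcj (is_match_lt_size mu mcj).
Qed.

Lemma encl_catr u v c d : encl (u ++ v) (size u + c) (size u + d) <-> encl v c d.
Proof.
split=> -[j mcj lt_cdj].
  have le_u_j : size u <= j by lia.
  by exists (j - size u); [rewrite -(is_match_catr u) subnKC | lia].
by exists (size u + j); rewrite ?is_match_catr //; lia.
Qed.

Lemma encl_wrap0 a d : ballot a -> balanced a -> encl (wrap a) 0 d <-> 0 < d <= size a.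
Proof.
move=> ba ea; split=> [[j] | lt_0da]; last by exists (size a).+1; rewrite ?is_match_wrap0.
by rewrite is_match_wrap0 // => /eqP->.
Qed.

Lemma encl_wrapS a c d : matched a -> encl (wrap a) c.+1 d.+1 <-> encl a c d.
Proof.
move=> ma; split=> [[[|j] mcj lt_cdj] // | [j mcj lt_cdj]].
  have lt_c_a : c < size a by move: (is_match_isU mcj); rewrite isU_wrapS => /isU_lt_size.
  by move: mcj; rewrite is_match_wrapS // => /andP[_ mcj]; exists j.
have lt_c_a := isU_lt_size (is_match_isU mcj).
by exists j.+1; rewrite ?is_match_wrapS ?(is_match_lt_size ma mcj).
Qed.

End Enclosure.

Section Parents.
Implicit Types (w u v a : seq bool) (i j k c d : nat).

Definition is_parent w c d :=
  [/\ isU w c, isU w d, encl w c d & forall c', encl w c' d -> c' <= c].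

Definition is_root w d := isU w d /\ forall c, ~ encl w c d.

Definition rootb w d := isU w d && [forall c : 'I_(size w), ~~ contains w c d].

Lemma parentP w c d : matched w -> reflect (is_parent w c d) (parent w c d).
Proof.
move=> mw; apply: (iffP and4P) => [[Uc Ud /(containsP _ _ mw) ecd /forallP inner]|].
  split=> // c' ec'd; have := inner (Ordinal (isU_lt_size (encl_isU ec'd))).
  by rewrite /= (encl_isU ec'd) => /implyP; apply; apply/containsP.
case=> Uc Ud ecd inner; split=> //; first exact/containsP.
by apply/forallP => c'; apply/implyP => /andP[_ /(containsP _ _ mw)/inner].
Qed.

Lemma rootP w d : matched w -> reflect (is_root w d) (rootb w d).
Proof.
move=> mw; apply: (iffP andP) => -[Ud top]; split=> //.
  move=> c ecd; move/forallP/(_ (Ordinal (isU_lt_size (encl_isU ecd))))/negP: top.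
  by apply; apply/containsP.
by apply/forallP => c; apply/negP => /(containsP _ _ mw)/top.
Qed.

Lemma encl_catl_lt u v c d : matched u -> d < size u ->
  encl (u ++ v) c d <-> encl u c d.
Proof.
by move=> mu lt_d_u; split=> ecd; apply/(encl_catl v d mu (ltn_trans (encl_lt ecd) lt_d_u)).
Qed.

Lemma encl_catr_ge u v c d : matched u -> encl (u ++ v) c (size u + d) -> size u <= c.
Proof.
move=> mu ecd; rewrite leqNgt; apply/negP => lt_c_u.
by move/(encl_catl v _ mu lt_c_u)/(encl_lt_size mu): ecd; rewrite ltnNge leq_addr.
Qed.

Lemma is_parent_catl u v c d : matched u -> c < size u ->
  is_parent (u ++ v) c d <-> is_parent u c d.
Proof.
move=> mu lt_c_u; split=> -[Uc Ud ecd inner].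
  have {}ecd := (encl_catl v d mu lt_c_u).1 ecd; have lt_d_u := encl_lt_size mu ecd.
  rewrite !isU_catl // in Uc Ud.
  by split=> // c' /(encl_catl_lt v _ mu lt_d_u)/inner.
have lt_d_u := encl_lt_size mu ecd.
split; rewrite ?isU_catl //; first exact/(encl_catl v d mu lt_c_u).
by move=> c' /(encl_catl_lt v _ mu lt_d_u)/inner.
Qed.

Lemma is_parent_catr u v c d : matched u ->
  is_parent (u ++ v) (size u + c) (size u + d) <-> is_parent v c d.
Proof.
move=> mu; split=> -[Uc Ud ecd inner].
  rewrite !isU_catr in Uc Ud; split=> //; first exact/(encl_catr u).
  by move=> c' ec'd; rewrite -(leq_add2l (size u)); apply/inner/encl_catr.
split; rewrite ?isU_catr //; first exact/encl_catr.
move=> c' ec'd; rewrite -(subnKC (encl_catr_ge mu ec'd)) leq_add2l.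
by apply/inner/(encl_catr u); rewrite subnKC // (encl_catr_ge mu ec'd).
Qed.

Lemma is_root_catl u v d : matched u -> d < size u ->
  is_root (u ++ v) d <-> is_root u d.
Proof.
move=> mu lt_d_u; rewrite /is_root isU_catl //.
by split=> -[Ud top]; split=> // c /(encl_catl_lt v _ mu lt_d_u); apply: top.
Qed.

Lemma is_root_catr u v d : matched u -> is_root (u ++ v) (size u + d) <-> is_root v d.
Proof.
move=> mu; rewrite /is_root isU_catr; split=> -[Ud top]; split=> // c.
  by move/(encl_catr u); apply: top.
move=> ecd; have le_u_c := encl_catr_ge mu ecd.
by apply: (top (c - size u)); apply/(encl_catr u); rewrite subnKC.
Qed.

Lemma leaf_catl u v i : endsD u -> i < size u -> leaf (u ++ v) i = leaf u i.
Proof.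
move=> eu lt_i_u; rewrite /leaf isU_catl //; case: (ltnP i.+1 (size u)) => [|le_u_i1].
  by move/isU_catl->.
rewrite (_ : i = (size u).-1) in eu *; last by lia.
by move/negbTE: eu => ->.
Qed.

Lemma leaf_catr u v i : leaf (u ++ v) (size u + i) = leaf v i.
Proof. by rewrite /leaf -addnS !isU_catr. Qed.

Lemma cap_catl u v i : i <= size u -> cap (u ++ v) i = cap u i.
Proof. by move=> le_i_u; rewrite /cap takel_cat. Qed.

Lemma cap_catr u v i : cap (u ++ v) (size u + i) = nD u + cap v i.
Proof. by rewrite /cap take_cat ltnNge leq_addr /= addKn nD_cat. Qed.

End Parents.

Section ParentsWrap.
Variable a : seq bool.
Hypotheses (ma : matched a) (ba : ballot a) (ea : balanced a).

Lemma is_parent_wrap0 j : is_parent (wrap a) 0 j.+1 <-> is_root a j.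
Proof.
split=> [[_ Uj _ inner] | [Uj top]].
  rewrite isU_wrapS in Uj; split=> // c eca.
  by have := inner c.+1 (proj2 (encl_wrapS _ _ ma) eca).
have lt_j_a := isU_lt_size Uj.
split; rewrite ?isU_wrapS //; first exact/(encl_wrap0 _ ba ea).
by case=> // c /(encl_wrapS _ _ ma)/top.
Qed.

Lemma is_parent_wrapS i j : is_parent (wrap a) i.+1 j.+1 <-> is_parent a i j.
Proof.
split=> -[Ui Uj eij inner].
  rewrite !isU_wrapS in Ui Uj; split=> //; first exact/(encl_wrapS _ _ ma).
  by move=> c eca; apply: (inner c.+1); apply/encl_wrapS.
split; rewrite ?isU_wrapS //; first exact/encl_wrapS.
by case=> // c /(encl_wrapS _ _ ma)/inner.
Qed.

Lemma is_root_wrap0 : is_root (wrap a) 0.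
Proof. by split=> // c /encl_lt. Qed.

Lemma is_root_wrapS i : ~ is_root (wrap a) i.+1.
Proof.
rewrite /is_root isU_wrapS => -[/isU_lt_size lt_i_a /(_ 0)]; apply.
exact/(encl_wrap0 _ ba ea).
Qed.

Lemma leaf_wrap0 : leaf (wrap a) 0 = (a == [::]).
Proof.
rewrite /leaf isU_wrapS; case: a ba => [|[] s] // ba'.
by move: (ba' 1); rewrite take_cons take0.
Qed.

Lemma leaf_wrapS i : leaf (wrap a) i.+1 = leaf a i.
Proof. by rewrite /leaf !isU_wrapS. Qed.

Lemma cap_wrapS i : i <= size a -> cap (wrap a) i.+1 = cap a i.
Proof. by move=> le_i_a; rewrite /cap /wrap /= takel_cat. Qed.

End ParentsWrap.

Lemma forall_lt_add (P : nat -> Prop) m n :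
  (forall i, i < m + n -> P i) <-> (forall i, i < m -> P i) /\ (forall i, i < n -> P (m + i)).
Proof.
split=> [all_mn | [all_m all_n] i lt_i_mn].
  by split=> i lt_i; apply: all_mn; lia.
case: (ltnP i m) => [/all_m // | le_m_i].
by rewrite -(subnKC le_m_i); apply: all_n; rewrite -(ltn_add2l m) subnKC.
Qed.

Section Labellings.
Implicit Types (w u v a : seq bool) (f g : nat -> nat) (i j c x : nat).

Definition label_ok w c f i :=
  [/\ ~~ isU w i -> f i = 0, leaf w i -> f i <= c + cap w i
    & forall j, is_parent w i j -> f i <= f j].

Definition roots_above w x f := forall i, is_root w i -> x <= f i.

(* Labellings with every leaf capacity raised by [c] and every root label at
   least [x]: the LS labellings of [w] are the case [c = x = 0]. *)
Definition labelling w c x f :=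
  (forall i, i < size w -> label_ok w c f i) /\ roots_above w x f.

Definition labellingb w c x f :=
  [forall i : 'I_(size w),
     [&& ~~ isU w i ==> (f i == 0), leaf w i ==> (f i <= c + cap w i),
         [forall j : 'I_(size w), parent w i j ==> (f i <= f j)]
       & rootb w i ==> (x <= f i)]].

Lemma labellingP w c x f : matched w -> reflect (labelling w c x f) (labellingb w c x f).
Proof.
move=> mw; apply: (iffP forallP) => [lab | [lab rt] i].
  split=> [i lt_i_w | i /[dup] /(rootP _ mw) ri [/isU_lt_size lt_i_w _]].
    have /and4P[/implyP zero /implyP lf /forallP par _] := lab (Ordinal lt_i_w).
    split=> //; first by move/zero/eqP.
    move=> j pij; have [_ /isU_lt_size lt_j_w _ _] := pij.
    by move/implyP: (par (Ordinal lt_j_w)); apply; apply/parentP.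
  by have /and4P[_ _ _ /implyP] := lab (Ordinal lt_i_w); apply.
have [zero lf par] := lab i (ltn_ord i); apply/and4P; split.
- by apply/implyP => /zero->.
- exact/implyP.
- by apply/forallP => j; apply/implyP => /(parentP _ _ mw)/par.
- by apply/implyP => /(rootP _ mw)/rt.
Qed.

Lemma eq_labellingb w c x f g : (forall i, i < size w -> f i = g i) ->
  labellingb w c x f = labellingb w c x g.
Proof.
move=> fg; apply: eq_forallb => i; rewrite !fg //; congr [&& _, _, _ & _].
by apply: eq_forallb => j; rewrite !fg.
Qed.

Lemma label_ok_catl u v c f i : matched u -> endsD u -> i < size u ->
  label_ok (u ++ v) c f i <-> label_ok u c f i.
Proof.
move=> mu eu lt_i_u.
rewrite /label_ok (isU_catl v lt_i_u) (leaf_catl v eu lt_i_u) (cap_catl v (ltnW lt_i_u)).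
have pe j := is_parent_catl v j mu lt_i_u.
by split=> -[zero lf par]; split=> // j /pe/par.
Qed.

Lemma label_ok_catr u v c f i : matched u ->
  label_ok (u ++ v) c f (size u + i) <-> label_ok v (c + nD u) (fun k => f (size u + k)) i.
Proof.
move=> mu; rewrite /label_ok isU_catr leaf_catr cap_catr addnA.
have pe j := is_parent_catr v i j mu.
split=> -[zero lf par]; split=> //; first by move=> j /pe/par.
move=> j pij; have le_u_j : size u <= j by have [_ _ /encl_lt + _] := pij; lia.
by move: pij; rewrite -(subnKC le_u_j) => /pe/par.
Qed.

Lemma roots_above_cat u v x f : matched u ->
  roots_above (u ++ v) x f <->
  roots_above u x f /\ roots_above v x (fun k => f (size u + k)).
Proof.
move=> mu; split=> [rt | [rtu rtv] i ri].
  split=> i ri; apply: rt; last exact/(is_root_catr v i mu).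
  exact/(is_root_catl v mu (isU_lt_size ri.1)).
have [lt_i_u | le_u_i] := ltnP i (size u).
  exact/rtu/(is_root_catl v mu lt_i_u).
by move: ri; rewrite -(subnKC le_u_i) => /(is_root_catr v _ mu)/rtv.
Qed.

Lemma labelling_cat u v c x f : matched u -> endsD u ->
  labelling (u ++ v) c x f <->
  labelling u c x f /\ labelling v (c + nD u) x (fun k => f (size u + k)).
Proof.
move=> mu eu; rewrite /labelling size_cat forall_lt_add roots_above_cat //.
have oku i : i < size u -> label_ok (u ++ v) c f i <-> label_ok u c f i.
  exact: label_ok_catl.
have okv i : label_ok (u ++ v) c f (size u + i) <-> _ := label_ok_catr v c f i mu.
split=> [[[labu labv] [rtu rtv]] | [[labu rtu] [labv rtv]]].
  by split; split=> // i lt_i; [apply/oku/labu | apply/okv/labv].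
by split; split=> // i lt_i; [apply/oku/labu | apply/okv/labv].
Qed.

End Labellings.

Section LabellingsWrap.
Variable a : seq bool.
Hypotheses (ma : matched a) (ba : ballot a) (ea : balanced a).
Implicit Types (f : nat -> nat) (i c x : nat).

Lemma label_ok_wrap0 c f :
  label_ok (wrap a) c f 0 <-> (a = [::] -> f 0 <= c) /\ roots_above a (f 0) (fun k => f k.+1).
Proof.
rewrite /label_ok leaf_wrap0 // addn0; split=> [[_ lf par] | [lf rt]].
  by split=> [/eqP // | j /(is_parent_wrap0 ma ba ea j)/par].
split=> // [/eqP // | [|j]]; first by case=> _ _ /encl_lt.
by move/(is_parent_wrap0 ma ba ea j)/rt.
Qed.

Lemma label_ok_wrapS c f i : i < size a ->
  label_ok (wrap a) c f i.+1 <-> label_ok a c (fun k => f k.+1) i.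
Proof.
move=> lt_i_a; rewrite /label_ok isU_wrapS leaf_wrapS (cap_wrapS (ltnW lt_i_a)).
split=> -[zero lf par]; split=> //; first by move=> j /(is_parent_wrapS ma i j)/par.
by case=> [[_ _ /encl_lt] // | j /(is_parent_wrapS ma i j)/par].
Qed.

Lemma label_ok_wrap_last c f : label_ok (wrap a) c f (size a).+1 <-> f (size a).+1 = 0.
Proof.
rewrite /label_ok /leaf (negbTE (isU_wrap_last a)); split=> [[/(_ isT) //] | zero].
by split=> // j [Ul]; move: Ul; rewrite (negbTE (isU_wrap_last a)).
Qed.

Lemma roots_above_wrap x f : roots_above (wrap a) x f <-> x <= f 0.
Proof.
by split=> [/(_ 0 (is_root_wrap0 a)) | le_x_f0 [|i] // /(is_root_wrapS ba ea)].
Qed.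

Lemma labelling_wrap c x f :
  labelling (wrap a) c x f <->
  [/\ x <= f 0, a = [::] -> f 0 <= c, f (size a).+1 = 0
    & labelling a c (f 0) (fun k => f k.+1)].
Proof.
rewrite /labelling roots_above_wrap size_wrap.
split=> [[lab le_x_f0] | [le_x_f0 lf0 zero [lab rt]]].
  have [lf0 rt] := (label_ok_wrap0 c f).1 (lab 0 isT).
  split=> //; first exact/(label_ok_wrap_last c f)/lab.
  by split=> // i lt_i_a; apply/(label_ok_wrapS c f lt_i_a)/lab; rewrite ltnS ltnW.
split=> // -[_ | i]; first exact/label_ok_wrap0.
rewrite ltnS leq_eqVlt => /predU1P[-> | lt_i_a]; first exact/label_ok_wrap_last.
exact/(label_ok_wrapS c f lt_i_a)/lab.
Qed.

End LabellingsWrap.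

Lemma labellingb_cat u v c x s1 s2 : matched u -> endsD u -> matched v ->
  size s1 = size u ->
  labellingb (u ++ v) c x (nth 0 (s1 ++ s2)) =
  labellingb u c x (nth 0 s1) && labellingb v (c + nD u) x (nth 0 s2).
Proof.
move=> mu eu mv s1u.
have nth_l i : i < size u -> nth 0 (s1 ++ s2) i = nth 0 s1 i.
  by move=> lt_i_u; rewrite nth_cat s1u lt_i_u.
have nth_r i : i < size v -> nth 0 (s1 ++ s2) (size u + i) = nth 0 s2 i.
  by move=> _; rewrite nth_cat s1u ltnNge leq_addr addKn.
rewrite -(eq_labellingb c x nth_l) -(eq_labellingb _ _ nth_r).
apply/(labellingP _ _ _ (matched_cat mu mv))/andP; rewrite labelling_cat //.
all: by case=> lu lv; split; [apply/(labellingP _ _ _ mu) | apply/(labellingP _ _ _ mv)].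
Qed.

Lemma labellingb_wrap a c x y s z : matched a -> ballot a -> balanced a ->
  size s = size a ->
  labellingb (wrap a) c x (nth 0 ([:: y] ++ (s ++ [:: z]))) =
  [&& (x <= y) && ((a == [::]) ==> (y <= c)), z == 0 & labellingb a c y (nth 0 s)].
Proof.
move=> ma ba ea sa.
have nth_in i : i < size a -> nth 0 ([:: y] ++ (s ++ [:: z])) i.+1 = nth 0 s i.
  by move=> lt_i_a; rewrite /= nth_cat sa lt_i_a.
have nth_last : nth 0 ([:: y] ++ (s ++ [:: z])) (size a).+1 = z.
  by rewrite /= nth_cat sa ltnn subnn.
rewrite -(eq_labellingb c y nth_in).
apply/(labellingP _ _ _ (matched_wrap ma ba ea))/and3P; rewrite labelling_wrap // nth_last /=.
  case=> le_x_y ly0 z0 /(labellingP _ _ _ ma) lab; split=> //; last exact/eqP.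
  by rewrite le_x_y; apply/implyP => /eqP.
case=> /andP[le_x_y /implyP ly0] /eqP z0 /(labellingP _ _ _ ma) lab.
by split=> // a0; apply/ly0/eqP.
Qed.

Fixpoint seqs_below N n : seq (seq nat) :=
  if n is n'.+1 then [seq y :: s | y <- iota 0 N, s <- seqs_below N n'] else [:: [::]].

Lemma mem_seqs_below N n s :
  (s \in seqs_below N n) = (size s == n) && all (fun y => y < N) s.
Proof.
elim: n s => [|n IHn] s /=; first by rewrite inE; case: s.
apply/allpairsP/idP => [[[y t] [/= y_N t_Nn ->]] | ].
  by move: y_N t_Nn; rewrite /= mem_iota IHn eqSS => /andP[_ ->] /andP[-> ->].
case: s => [|y t] //= /andP[size_t /andP[y_N t_N]].
by exists (y, t); rewrite /= mem_iota y_N IHn -eqSS size_t.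
Qed.

Lemma uniq_seqs_below N n : uniq (seqs_below N n).
Proof.
elim: n => //= n IHn; apply: allpairs_uniq => //; first exact: iota_uniq.
by move=> [y1 t1] [y2 t2] _ _ /= [-> ->].
Qed.

Lemma size_seqs_below N n s : s \in seqs_below N n -> size s = n.
Proof. by rewrite mem_seqs_below => /andP[/eqP]. Qed.

Section LabelSums.
Local Open Scope ring_scope.

Lemma big_seqs_below_add (R : nmodType) N m n (F : seq nat -> R) :
  \sum_(s <- seqs_below N (m + n)) F s =
  \sum_(s1 <- seqs_below N m) \sum_(s2 <- seqs_below N n) F (s1 ++ s2).
Proof.
elim: m F => [|m IHm] F; first by rewrite add0n big_seq1.
by rewrite addSn /= !big_allpairs_dep; apply: eq_bigr => y _; rewrite IHm.
Qed.

Lemma big_seqs_below1 (R : nmodType) N (F : seq nat -> R) :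
  \sum_(s <- seqs_below N 1) F s = \sum_(y <- iota 0 N) F [:: y].
Proof. by rewrite big_allpairs_dep; apply: eq_bigr => y _; rewrite big_seq1. Qed.

(* Labels are drawn from [0, N): every label is at most a leaf capacity, so
   large [N] cuts nothing (see [label_sum_fword]). *)
Definition label_sum N w c x : {poly rat} :=
  \sum_(s <- seqs_below N (size w))
     (if labellingb w c x (nth 0%N s) then 'X^(sumn s) else 0).

Lemma label_sum_cat N u v c x : matched u -> endsD u -> matched v ->
  label_sum N (u ++ v) c x = label_sum N u c x * label_sum N v (c + nD u) x.
Proof.
move=> mu eu mv; rewrite /label_sum size_cat big_seqs_below_add mulr_suml.
apply: eq_big_seq => s1 /size_seqs_below s1u; rewrite mulr_sumr.
apply: eq_bigr => s2 _; rewrite labellingb_cat // sumn_cat exprD.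
by case: (labellingb u _ _ _); case: (labellingb v _ _ _); rewrite ?mulr0 ?mul0r.
Qed.

Lemma label_sum_wrap N a c x : matched a -> ballot a -> balanced a -> (0 < N)%N ->
  label_sum N (wrap a) c x =
  \sum_(y <- iota 0 N)
     (if (x <= y)%N && ((a == [::]) ==> (y <= c)%N) then 'X^y * label_sum N a c y else 0).
Proof.
move=> ma ba ea N_gt0; rewrite /label_sum size_wrap (_ : _.+2 = 1 + (size a + 1))%N; last by lia.
rewrite big_seqs_below_add big_seqs_below1; apply: eq_bigr => y _.
rewrite big_seqs_below_add; case: ifP => [root_y | no_y]; last first.
  rewrite big1_seq // => s /size_seqs_below sa.
  by rewrite big_seqs_below1 big1 // => z _; rewrite labellingb_wrap // no_y.
rewrite mulr_sumr; apply: eq_big_seq => s /size_seqs_below sa.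
rewrite big_seqs_below1 (bigD1_seq 0%N) ?mem_iota ?iota_uniq //=.
rewrite labellingb_wrap // root_y eqxx big1 ?addr0 => [|z /negbTE z_neq0]; last first.
  by rewrite labellingb_wrap // z_neq0 andbF.
by rewrite sumn_cat /= !addn0 exprD; case: ifP; rewrite ?mulr0.
Qed.

End LabelSums.

(* A plane forest: [FCons t f] is a tree whose root carries the forest [t],
   followed by the forest [f]. *)
Inductive forest := FNil | FCons of forest & forest.

Fixpoint fword F := if F is FCons A B then wrap (fword A) ++ fword B else [::].
Fixpoint fsize F := if F is FCons A B then (fsize A).+1 + fsize B else 0.

Fixpoint fpoly F : {poly rat} :=
  if F is FCons A B then (fpoly A * qbin ((fsize A).+1 + fsize B) (fsize B) * fpoly B)%R
  else 1%R.

Lemma fword_cons A B : fword (FCons A B) = wrap (fword A) ++ fword B.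
Proof. by []. Qed.

Lemma size_fword F : size (fword F) = (fsize F).*2.
Proof.
by elim: F => // A IHA B IHB; rewrite fword_cons size_cat size_wrap IHA IHB /=; lia.
Qed.

Lemma nD_fword F : nD (fword F) = fsize F.
Proof.
by elim: F => // A IHA B IHB; rewrite fword_cons nD_cat nD_wrap IHA IHB.
Qed.

Lemma balanced_fword F : balanced (fword F).
Proof.
by elim: F => // A IHA B IHB; rewrite fword_cons; apply: balanced_cat (balanced_wrap IHA) IHB.
Qed.

Lemma ballot_fword F : ballot (fword F).
Proof.
elim: F => [[] // | A IHA B IHB]; have eA := balanced_fword A.
by rewrite fword_cons; apply: ballot_cat (ballot_wrap IHA eA) (balanced_wrap eA) IHB.
Qed.

Lemma matched_fword F : matched (fword F).
Proof.
elim: F => [i | A IHA B IHB]; first by rewrite /isU nth_nil.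
have mA := matched_wrap IHA (ballot_fword A) (balanced_fword A).
by rewrite fword_cons; apply: matched_cat mA IHB.
Qed.

Lemma endsD_fword F : endsD (fword F).
Proof. by elim: F => // A _ B IHB; rewrite fword_cons; apply: endsD_cat (endsD_wrap _) IHB. Qed.

(* With slack [d = 0] this splits [r] at its first unmatched D. *)
Lemma split_excess r d : nU r + d < nD r ->
  exists a t, [/\ r = a ++ false :: t, nU a + d = nD a
                & forall k, nD (take k a) <= nU (take k a) + d].
Proof.
rewrite /nU /nD; elim: r d => [|[] r IHr] d //= exc.
  have /IHr[a [t [-> bal pre]]] : count id r + d.+1 < count negb r by lia.
  exists (true :: a), t; split=> //=; first by lia.
  by case=> [|k] /=; rewrite ?take_cons /=; [lia | have := pre k; lia].
case: d exc => [_ | d exc]; first by exists [::], r; split=> // k; rewrite take_nil.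
have /IHr[a [t [-> bal pre]]] : count id r + d < count negb r by lia.
exists (false :: a), t; split=> //=; first by lia.
by case=> [|k] /=; rewrite ?take_cons /=; [lia | have := pre k; lia].
Qed.

Lemma fword_surj w : balanced w -> ballot w -> exists F, fword F = w.
Proof.
have [n] := ubnP (size w); elim: n w => // n IHn [_ _ _ | b r]; first by exists FNil.
move=> lt_w_n bal pre; have b_U : b = true by have := pre 1; rewrite take_cons take0; case: (b).
subst b; have /(@split_excess r 0)[a [t [r_eq bal_a pre_a]]] : nU r + 0 < nD r.
  by move: bal; rewrite /balanced /nU /nD /=; lia.
rewrite addn0 in bal_a; have {}pre_a : ballot a by move=> k; rewrite -[X in _ <= X]addn0.
have w_eq : true :: r = wrap a ++ t by rewrite r_eq /wrap /= -catA.
rewrite w_eq in bal pre lt_w_n *; have bal_wa := balanced_wrap bal_a.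
have bal_t : balanced t by move: bal; rewrite /balanced !nU_cat !nD_cat bal_wa => /addnI.
have pre_t : ballot t.
  move=> k; have := pre (size (wrap a) + k).
  by rewrite take_cat ltnNge leq_addr addKn nU_cat nD_cat bal_wa leq_add2l.
rewrite size_cat size_wrap in lt_w_n.
have [|FA <-] := IHn a _ bal_a pre_a; first by lia.
have [|FB <-] := IHn t _ bal_t pre_t; first by lia.
by exists (FCons FA FB).
Qed.

Lemma dyck_fword w : dyck w -> exists F, fword F = w.
Proof.
case/andP=> /eqP bal /forallP pre; apply: fword_surj => // k.
have [le_k_w | lt_w_k] := leqP k (size w); first exact: (pre (Ordinal (n := (size w).+1) le_k_w)).
by rewrite take_oversize ?(ltnW lt_w_k) //; have := pre ord_max; rewrite take_size.
Qed.

Section ForestSums.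
Local Open Scope ring_scope.

Lemma big_iota_window (R : nmodType) N x c (G : nat -> R) : (c < N)%N ->
  \sum_(y <- iota 0 N) (if (x <= y <= c)%N then G y else 0) = \sum_(x <= y < c.+1) G y.
Proof.
move=> lt_c_N; rewrite (@big_nat_widenl _ _ _ x 0) // (@big_nat_widen _ _ _ 0 c.+1 N) //.
by rewrite big_mkcond /index_iota subn0; apply: eq_bigr => y _; rewrite ltnS.
Qed.

Lemma label_sum_nil N c x : label_sum N [::] c x = 1.
Proof. by rewrite /label_sum big_seq1; case: ifP => // /forallP[[]]. Qed.

Definition forest_sum F c x : {poly rat} :=
  if (x <= c)%N then 'X^(x * fsize F) * qbin (fsize F + (c - x)) (fsize F) * fpoly F
  else (fsize F == 0%N)%:R.

Lemma label_sum_wrap_fword N A c x : (c + fsize A < N)%N ->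
  (forall y, label_sum N (fword A) c y = forest_sum A c y) ->
  label_sum N (wrap (fword A)) c x =
  if (x <= c)%N
  then 'X^(x * (fsize A).+1) * qbin ((fsize A).+1 + (c - x)) (fsize A).+1 * fpoly A
  else 0.
Proof.
move=> lt_N IHA.
(* A root label above [c] is excluded by the root's leaf capacity if [A] is
   empty, and leaves no labelling of [A] otherwise. *)
have root_term y : (if (x <= y)%N && ((fword A == [::]) ==> (y <= c)%N)
                    then 'X^y * forest_sum A c y else 0) =
  if (x <= y <= c)%N
  then 'X^(y * (fsize A).+1) * qbin (fsize A + (c - y)) (fsize A) * fpoly A else 0.
  rewrite -size_eq0 size_fword double_eq0 /forest_sum.
  case: (leqP y c) => [le_y_c | lt_c_y].
    by rewrite implybT andbT mulnS exprD !mulrA.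
  by case: eqP => /= _; rewrite ?andbF ?mulr0 ?if_same.
rewrite label_sum_wrap; [|exact: matched_fword|exact: ballot_fword|exact: balanced_fword|lia].
under eq_bigr => y _ do rewrite IHA root_term.
rewrite big_iota_window; last by lia.
case: leqP => [le_x_c | lt_c_x]; first by rewrite -mulr_suml qbin_hockey.
by rewrite big_geq.
Qed.

Lemma label_sum_fword N F c x : (c + fsize F < N)%N ->
  label_sum N (fword F) c x = forest_sum F c x.
Proof.
elim: F c x => [|A IHA B IHB] c x lt_N.
  by rewrite label_sum_nil /forest_sum /= muln0 qbin0 !mul1r; case: ifP.
rewrite /= in lt_N; have mA : matched (wrap (fword A)).
  by apply: matched_wrap; [apply: matched_fword | apply: ballot_fword | apply: balanced_fword].
rewrite fword_cons label_sum_cat ?endsD_wrap //; last exact: matched_fword.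
rewrite nD_wrap nD_fword IHB /=; last by lia.
rewrite (label_sum_wrap_fword x _ (fun y => IHA c y _)) /forest_sum; [|lia..].
rewrite -[fsize (FCons A B)]/((fsize A).+1 + fsize B)%N.
rewrite -[fpoly (FCons A B)]/(fpoly A * qbin ((fsize A).+1 + fsize B) (fsize B) * fpoly B).
case: leqP => [le_x_c | lt_c_x]; last by rewrite mul0r.
rewrite (leq_trans le_x_c (leq_addr _ _)) (_ : c + _ - x = (fsize A).+1 + (c - x))%N; last by lia.
have := qbin_trinomial (fsize A).+1 (fsize B) (c - x).
by rewrite mulnDr exprD => tri; ring: tri.
Qed.

Lemma label_sum_fword0 N F c : (c + fsize F < N)%N ->
  label_sum N (fword F) c 0 = qbin (fsize F + c) (fsize F) * fpoly F.
Proof. by move=> lt_N; rewrite label_sum_fword // /forest_sum mul0n subn0 mul1r. Qed.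

End ForestSums.

Section PpolyAsLabelSum.
Variable n : nat.
Implicit Type f : {ffun 'I_n -> 'I_n.+1}.

Definition ffun_seq f : seq nat := [seq val (f i) | i <- enum 'I_n].

Lemma nth_ffun_seq f (i : 'I_n) : nth 0 (ffun_seq f) i = f i.
Proof. by rewrite (nth_map i) ?size_enum_ord // nth_ord_enum. Qed.

Lemma nth_ffun_seqE f i : i < n ->
  nth 0 (ffun_seq f) i = oapp (fun j : 'I_n => val (f j)) 0 (insub i).
Proof. by move=> lt_i_n; rewrite insubT /= -(nth_ffun_seq f (Ordinal lt_i_n)). Qed.

Lemma ffun_seq_inj : injective ffun_seq.
Proof. by move=> f g fg; apply/ffunP => i; apply: val_inj; rewrite /= -!nth_ffun_seq fg. Qed.

Lemma perm_ffun_seq :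
  perm_eq (map ffun_seq (index_enum {ffun 'I_n -> 'I_n.+1})) (seqs_below n.+1 n).
Proof.
apply: uniq_perm; rewrite ?uniq_seqs_below ?(map_inj_uniq ffun_seq_inj) ?index_enum_uniq //.
move=> s; rewrite mem_seqs_below; apply/mapP/andP => [[f _ ->] | [/eqP size_s /allP s_lt]].
  rewrite /ffun_seq size_map size_enum_ord; split=> //.
  by apply/allP => _ /mapP[i _ ->]; apply: ltn_ord.
exists [ffun i : 'I_n => inord (nth 0 s i) : 'I_n.+1]; first exact: mem_index_enum.
apply: (@eq_from_nth _ 0); first by rewrite size_map size_enum_ord.
move=> i; rewrite size_s => lt_i_n; rewrite -[i]/(val (Ordinal lt_i_n)).
by rewrite nth_ffun_seq ffunE inordK // ltnS -ltnS; apply/s_lt/mem_nth; rewrite size_s.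
Qed.

End PpolyAsLabelSum.

Lemma Ppoly_label_sum w : Ppoly w = label_sum (size w).+1 w 0 0.
Proof.
rewrite /Ppoly /label_sum big_mkcond -(perm_big _ (perm_ffun_seq _)) big_map /=.
apply: eq_bigr => f _; rewrite sumnE big_map big_enum.
congr (if _ then _ else _).
rewrite (eq_labellingb 0 0 (nth_ffun_seqE f)).
by apply: eq_forallb => i; rewrite add0n leq0n implybT andbT.
Qed.

Local Open Scope ring_scope.

Lemma Ppoly_fword F : Ppoly (fword F) = fpoly F.
Proof.
by rewrite Ppoly_label_sum label_sum_fword0 ?addn0 ?qbinn ?mul1r // size_fword add0n; lia.
Qed.

Theorem mainTheorem11 (n1 m1 : nat) (l1 l2 : seq bool) :
  dyck l1 -> size l1 = (2 * n1)%N ->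
  dyck l2 -> size l2 = (2 * m1)%N ->
  Ppoly (l1 ++ l2) = qbinom (n1 + m1) n1 * Ppoly l1 * Ppoly l2.
Proof.
move=> /dyck_fword[F1 <-] size1 /dyck_fword[F2 <-] size2.
have -> : n1 = fsize F1 by move: size1; rewrite size_fword; lia.
have -> : m1 = fsize F2 by move: size2; rewrite size_fword; lia.
rewrite !Ppoly_fword Ppoly_label_sum label_sum_cat;
  [| exact: matched_fword | exact: endsD_fword | exact: matched_fword].
rewrite nD_fword add0n !label_sum_fword0; try by rewrite size_cat !size_fword; lia.
by rewrite addn0 qbinn mul1r qbinomE ?leq_addr // qbin_sym addnC; ring.
Qed.
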